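(* Let $T>0$, $\alpha>0$, $C_{\alpha,T}=\frac{\alpha}{e^{\alpha T}-1}$, and let $\mathcal{G}_\theta$ be a neural operator (defined in the context) which is assumed to be an exact map from boundary input to boundary output of the closed-loop PDE, i.e. $Y(t)=\mathcal{G}_\theta(U)(t)$ for all $t\in[0,T]$. Assume $U:[0,T]\to\mathbb{R}$ is differentiable, $P,Q$ are differentiable, each activation $\sigma_l$ is a differentiable componentwise map, each kernel $\kappa^{(l)}(t,s)$ and bias $b_l(t)$ is differentiable in $t$ with differentiation under the integral sign permitted, and $\phi:[0,T]\times\mathbb{R}\to\mathbb{R}$ is continuously differentiable. Then: (a) $t\mapsto \mathcal{G}_\theta(U)(t)$ is differentiable and $$\frac{d\mathcal{G}_\theta(U)(t)}{dt}=\Lambda_\theta(t)\,\dot U(t)+\mu_\theta(t),$$ where $$\Lambda_\theta(t)=DQ(v_L(t))\,\Big[\mathrm{Diag}(\sigma_L')W_{L-1}\,\mathrm{Diag}(\sigma_{L-1}')W_{L-2}\cdots\mathrm{Diag}(\sigma_1')W_0\Big]\,DP(U(t)),$$ $$\mu_\theta(t)=DQ(v_L(t))\,\mathrm{Diag}(\sigma_L')\sum_{i=0}^{L-1}\Big[\prod_{j=1}^{i}W_{L-j}\,\mathrm{Diag}(\sigma_{L-j}')\Big]\Big(\int_0^T\frac{\partial\kappa^{(L-1-i)}(t,s)}{\partial t}v_{L-1-i}(s)\,ds+\frac{db_{L-1-i}(t)}{dt}\Big),$$ the product $\prod_{j=1}^{i}$ being ordered left to right in increasing $j$ and equal to the identity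 when $i=0$, and $\sigma_l'$ denoting the vector of derivatives of $\sigma_l$ evaluated at the pre-activation $W_{l-1}v_{l-1}(t)+\int_0^T\kappa^{(l-1)}(t,s)v_{l-1}(s)ds+b_{l-1}(t)$. (b) If for all $t\in[0,T]$ $$\partial_Y\phi(t,\mathcal{G}_\theta(U)(t))\,\frac{d\mathcal{G}_\theta(U)(t)}{dt}+\partial_t\phi(t,\mathcal{G}_\theta(U)(t))+\alpha\,\phi(t,\mathcal{G}_\theta(U)(t))+C_{\alpha,T}\,\phi(0,U(0))\le 0,$$ then the output $Y=\mathcal{G}_\theta(U)$ is boundary feasible over $[0,T]$ within the sublevel set of $\phi$: there exists $t_0\in[0,T]$ such that $\phi(t,Y(t))\le 0$ for all $t\in[t_0,T]$.
   Context: Setting: a closed-loop PDE with state $u:[0,1]^n\times[0,T]\to\mathcal{S}\subseteq\mathbb{R}$, Dirichlet boundary input $U(t)=u(\mathbf{1},t)$, constant initial condition $u(x,0)\equiv U(0)$ (so $Y(0)=U(0)$), and boundary output $Y(t)=u(\mathbf{0},t)$. Neural operator: $\mathcal{G}_\theta$ maps functions $U:[0,T]\to\mathcal{S}$ to functions $Y:[0,T]\to\mathcal{S}$ by $v_0(t)=P(U(t))$ with $P:\mathcal{S}\to\mathbb{R}^{d_{v_0}}$; $v_{l+1}(t)=\sigma_{l+1}\big(W_l v_l(t)+\int_0^T\kappa^{(l)}(t,s)v_l(s)\,ds+b_l(t)\big)$ for $l=0,\dots,L-1$, where $\sigma_{l+1}:\mathbb{R}^{d_{v_{l+1}}}\to\mathbb{R}^{d_{v_{l+1}}}$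 is an activation applied componentwise, $W_l\in\mathbb{R}^{d_{v_{l+1}}\times d_{v_l}}$, $\kappa^{(l)}\in C([0,T]\times[0,T];\mathbb{R}^{d_{v_{l+1}}\times d_{v_l}})$, $b_l\in C([0,T];\mathbb{R}^{d_{v_{l+1}}})$; $\mathcal{G}_\theta(U)(t)=Q(v_L(t))$ with $Q:\mathbb{R}^{d_{v_L}}\to\mathcal{S}$. Here $DP$, $DQ$ denote Jacobians. A function $\phi(t,Y)$ used this way is called a boundary control barrier function (BCBF). *)

From HB Require Import structures.
From mathcomp Require Import all_boot all_order all_algebra.
From mathcomp Require Import all_classical all_reals all_analysis.
Import Order.TTheory GRing.Theory Num.Theory.
Import numFieldNormedType.Exports.
Local Open Scope classical_set_scope.
Local Open Scope ring_scope.

(* Layer l (0 <= l < L) maps v_l : [0,T] -> R^{d l} to v_{l+1} : [0,T] -> R^{d (l+1)}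
   using W l, kappa l, b l and the scalar activation sigma (l+1) applied
   componentwise.  Fields at indices l >= L are irrelevant. *)
Record neural_op (R : realType) := NeuralOp {
  no_L : nat;
  no_d : nat -> nat;
  no_P : R -> 'cV[R]_(no_d 0);
  no_Q : 'cV[R]_(no_d no_L) -> R;
  no_W : forall l, 'M[R]_(no_d l.+1, no_d l);
  no_kappa : forall l, R -> R -> 'M[R]_(no_d l.+1, no_d l);
  no_b : forall l, R -> 'cV[R]_(no_d l.+1);
  no_sigma : nat -> R -> R }.
Arguments no_L {R}. Arguments no_d {R}. Arguments no_P {R}. Arguments no_Q {R}.
Arguments no_W {R}. Arguments no_kappa {R}. Arguments no_b {R}. Arguments no_sigma {R}.

Set Implicit Arguments. Unset Strict Implicit. Unset Printing Implicit Defensive.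

Section NeuralOperator.
Variables (R : realType) (N : neural_op R) (T : R) (U : R -> R).

Definition vint m (f : R -> 'cV[R]_m) : 'cV[R]_m :=
  \col_i Rintegral (@lebesgue_measure R) `[0, T] (fun s => f s i 0).

Fixpoint no_v (l : nat) : R -> 'cV[R]_(no_d N l) :=
  match l with
  | 0 => fun t => no_P N (U t)
  | l'.+1 => fun t => map_mx (no_sigma N l'.+1)
      (no_W N l' *m no_v l' t + vint (fun s => no_kappa N l' t s *m no_v l' s)
       + no_b N l' t)
  end.

Definition no_G (t : R) : R := no_Q N (no_v (no_L N) t).

Definition no_pre (l : nat) (t : R) : 'cV[R]_(no_d N l.+1) :=
  no_W N l *m no_v l t + vint (fun s => no_kappa N l t s *m no_v l s) + no_b N l t.

Definition no_Dsig (l : nat) (t : R) : 'M[R]_(no_d N l.+1) :=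
  diag_mx (map_mx (derive1 (no_sigma N l.+1)) (no_pre l t))^T.

Definition no_A (l : nat) (t : R) : 'M[R]_(no_d N l.+1, no_d N l) :=
  no_Dsig l t *m no_W N l.

(* no_prod m k t = Diag(sigma_m') W_{m-1} Diag(sigma_{m-1}') W_{m-2} ... Diag(sigma_{k+1}') W_k
   for k <= m, the identity matrix when k = m (conform_mx only serves to type the
   identity 'M_(d m) as 'M_(d m, d k) when m = k; other values are never used). *)
Fixpoint no_prod (m k : nat) (t : R) : 'M[R]_(no_d N m, no_d N k) :=
  match m with
  | 0 => conform_mx 0 (1%:M : 'M[R]_(no_d N 0))
  | m'.+1 => if (k <= m')%N then no_A m' t *m no_prod m' k t
             else conform_mx 0 (1%:M : 'M[R]_(no_d N m'.+1))
  end.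

Definition no_dkappa (l : nat) (t s : R) : 'M[R]_(no_d N l.+1, no_d N l) :=
  derive1 (fun t' => no_kappa N l t' s) t.

Definition no_g (l : nat) (t : R) : 'cV[R]_(no_d N l.+1) :=
  vint (fun s => no_dkappa l t s *m no_v l s) + derive1 (no_b N l) t.

Definition no_Lambda (t : R) : R :=
  'd (no_Q N) (no_v (no_L N) t) (no_prod (no_L N) 0 t *m derive1 (no_P N) (U t)).

(* mu_theta(t) = DQ(v_L(t)) Diag(sigma_L') sum_{i=0}^{L-1} [prod_{j=1}^i W_{L-j} Diag(sigma_{L-j}')] g_{L-1-i}(t),
   written with k = L-1-i:  Diag(sigma_L') [prod_{j=1}^{L-1-k} W_{L-j}Diag(sigma_{L-j}')]
   = no_prod L (k+1) * Diag(sigma_{k+1}'). *)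
Definition no_mu (t : R) : R :=
  'd (no_Q N) (no_v (no_L N) t)
    (\sum_(k < no_L N) (no_prod (no_L N) k.+1 t *m no_Dsig k t *m no_g k t)).

End NeuralOperator.

Definition C_alphaT (R : realType) (alpha T : R) : R := alpha / (expR (alpha * T) - 1).

(* Part (a) is the chain rule pushed through the layers: [v_0 = P o U] and
   [v_(l+1) = sigma_(l+1) o pre_l] with [pre_l' = W_l v_l' + g_l], so by induction
   [v_l' = U' prod_(l,0) DP + sum_(k < l) prod_(l,k+1) Diag(sigma_(k+1)') g_k].
   Part (b) is a comparison argument for [h s = phi s (Y s)]: with
   [c (e^(alpha T) - 1) = h 0], the hypothesis says that [e^(alpha s) (h s + c)] is
   nonincreasing on [[0, T]], whence [e^(alpha T) h T <= 0], i.e. feasibility from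
   [t0 = T] on.  Differentiating [h] only needs the partial derivatives of [phi]:
   continuity of [d_Y phi] makes the linearization of [phi] in [Y] uniform in [s]. *)

From HB Require Import structures.
From mathcomp Require Import all_boot all_order all_algebra.
From mathcomp Require Import all_classical all_reals all_analysis.
From mathcomp Require Import ring lra.
Import Order.TTheory GRing.Theory Num.Theory.
Import numFieldNormedType.Exports.
Local Open Scope classical_set_scope.
Local Open Scope ring_scope.

Section matrix_derivatives.
Context {R : realFieldType} {V : normedModType R}.

Lemma is_derive_mxP m n (M : V -> 'M[R]_(m, n)) (x v : V) (D : 'M[R]_(m, n)) :
  is_derive x v M D <-> forall i j, is_derive x v (fun y => M y i j) (D i j).
Proof.
split=> [[dM <-] i j|dMij].
  split; first by move/derivable_mxP: dM.
  by rewrite derive_mx // mxE.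
have dM : derivable M x v by apply/derivable_mxP => i j; case: (dMij i j).
split => //; rewrite derive_mx //; apply/matrixP => i j; rewrite mxE.
exact: derive_val.
Qed.

Lemma is_derive_mulmx m n p (A : 'M[R]_(m, n)) (f : V -> 'M[R]_(n, p)) (x v : V)
    (df : 'M[R]_(n, p)) :
  is_derive x v f df -> is_derive x v (fun y => A *m f y) (A *m df).
Proof.
move/is_derive_mxP => dfij; apply/is_derive_mxP => i j; rewrite mxE.
have -> : (fun y => (A *m f y) i j) = \sum_(k < n) (A i k \*: (fun y => f y k j)).
  by apply/funext => y; rewrite mxE fct_sumE.
by apply: is_derive_sum => k; apply: is_deriveZ.
Qed.

End matrix_derivatives.

Section chain_rules.
Context {R : realFieldType}.

Lemma is_derive_diff_comp {V W : normedModType R} {f : R -> V} {g : V -> W} {t : R}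
    {df : V} :
  is_derive t 1 f df -> differentiable g (f t) ->
  is_derive t 1 (g \o f) ('d g (f t) df).
Proof.
move=> [/derivable1_diffP df_t <-] dg.
have dgf : differentiable (g \o f) t by exact: differentiable_comp.
split; first exact/derivable1_diffP.
by rewrite deriveE // diff_comp //= [in RHS]deriveE.
Qed.

Lemma is_derive1_comp {V : normedModType R} {f : R -> R} {g : R -> V} {t df : R} :
  is_derive t 1 f df -> derivable g (f t) 1 ->
  is_derive t 1 (g \o f) (df *: derive1 g (f t)).
Proof.
move=> df_t dg.
by have := is_derive_diff_comp df_t (proj1 (derivable1_diffP _ _) dg); rewrite deriv1E.
Qed.

Lemma is_derive1_val {V : normedModType R} {f : R -> V} {t : R} {df} :
  is_derive t 1 f df -> derive1 f t = df.
Proof. by move=> f'; rewrite derive1E; exact: derive_val. Qed.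

Lemma is_derive_map_mx {m} {s : R -> R} {p : R -> 'cV[R]_m} {t : R} {dp} :
  (forall x, derivable s x 1) -> is_derive t 1 p dp ->
  is_derive t 1 (fun x => map_mx s (p x))
    (diag_mx (map_mx (derive1 s) (p t))^T *m dp).
Proof.
move=> ds /is_derive_mxP dpij; apply/is_derive_mxP => i j.
rewrite mul_diag_mx !mxE (ord1 j) mulrC.
have -> : (fun x => map_mx s (p x) i 0) = s \o (fun x => p x i 0).
  by apply/funext => x; rewrite mxE.
exact: is_derive1_comp.
Qed.

End chain_rules.

Section layer_derivatives.
Variables (R : realType) (N : neural_op R) (T : R) (U : R -> R) (t : R).
Hypotheses (dU : derivable U t 1) (dP : forall y, derivable (no_P N) y 1)
  (dsigma : forall l x, derivable (no_sigma N l) x 1)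
  (db : forall l, (l < no_L N)%N -> derivable (no_b N l) t 1)
  (dkappa : forall l, (l < no_L N)%N ->
     is_derive t 1 (fun t' => vint T (fun s => no_kappa N l t' s *m no_v N T U l s))
                   (vint T (fun s => no_dkappa N l t s *m no_v N T U l s))).

Lemma is_derive_no_pre {l dv} : (l < no_L N)%N ->
  is_derive t 1 (no_v N T U l) dv ->
  is_derive t 1 (no_pre N T U l) (no_W N l *m dv + no_g N T U l t).
Proof.
move=> lL dv_t.
have -> : no_pre N T U l = (fun x => no_W N l *m no_v N T U l x)
   + (fun t' => vint T (fun s => no_kappa N l t' s *m no_v N T U l s)) + no_b N l.
  by apply/funext => x.
rewrite /no_g -addrA; apply: is_deriveD; first exact: is_derive_mulmx.
by apply: is_deriveD; [exact: dkappa | rewrite derive1E; exact/derivableP/db].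
Qed.

Lemma is_derive_no_v {l} : (l <= no_L N)%N -> is_derive t 1 (no_v N T U l)
  (derive1 U t *: (no_prod N T U l 0 t *m derive1 (no_P N) (U t))
   + \sum_(k < l) (no_prod N T U l k.+1 t *m no_Dsig N T U k t *m no_g N T U k t)).
Proof.
elim: l => [_|l IH lL].
  apply: is_derive_eq; first exact: (is_derive1_comp (derivableP dU) (dP (U t))).
  by rewrite big_ord0 addr0 /= conform_mx_id mul1mx !derive1E.
change (no_v N T U l.+1) with (fun x => map_mx (no_sigma N l.+1) (no_pre N T U l x)).
apply: is_derive_eq.
  exact: is_derive_map_mx (dsigma l.+1) (is_derive_no_pre lL (IH (ltnW lL))).
rewrite -/(no_Dsig N T U l t) big_ord_recr /= ltnn conform_mx_id mul1mx.
under [in RHS]eq_bigr => i _ do rewrite ltn_ord.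
rewrite /no_A !mulmxDr !mulmx_sumr !scalemxAr !mulmxA.
by under [in LHS]eq_bigr do rewrite !mulmxA; rewrite !addrA.
Qed.

Lemma is_derive_no_G : differentiable (no_Q N) (no_v N T U (no_L N) t) ->
  is_derive t 1 (no_G N T U) (no_Lambda N T U t * derive1 U t + no_mu N T U t).
Proof.
move=> dQ; change (no_G N T U) with (no_Q N \o no_v N T U (no_L N)).
apply: is_derive_eq.
  exact: is_derive_diff_comp (is_derive_no_v (leqnn (no_L N))) dQ.
by rewrite linearD linearZ /= mulrC.
Qed.

End layer_derivatives.

Section real_functions.
Context {R : realType}.

Lemma within_continuous_prod_eps {A : set (R * R)} {f : R * R -> R} {p : R * R}
    {e : R} :
  {within A, continuous f} -> A p -> 0 < e ->
  exists2 d : R, 0 < d & forall q, A q -> `|p.1 - q.1| < d -> `|p.2 - q.2| < d ->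
    `|f p - f q| < e.
Proof.
move=> /subspace_continuousP /(_ p) fc Ap e0.
have := (cvgrPdist_lt _ _).1 (fc Ap) e e0.
rewrite near_withinE -nbhs_nearE => fe.
have /nbhs_ballP[d /= d0 {}fe] : nbhs p (fun q => A q -> `|f p - f q| < e) by exact: fe.
by exists d => // q Aq p1q1 p2q2; apply: (fe q) Aq; split; rewrite -ball_normE.
Qed.

Lemma mean_value_inequality (f : R -> R) (x y M : R) :
  (forall z, derivable f z 1) ->
  (forall z, `|z - x| <= `|y - x| -> `|derive1 f z| <= M) ->
  `|f y - f x| <= M * `|y - x|.
Proof.
move=> df fM.
have fc (a b : R) : {within `[a, b], continuous f}.
  apply: continuous_subspaceT => z.
  exact/differentiable_continuous/derivable1_diffP.
have f' (a b z : R) : z \in `]a, b[ -> is_derive z 1 f (derive1 f z).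
  by move=> _; rewrite derive1E; apply: derivableP.
have [xy|yx] := leP x y.
  have [c cxy ->] := MVT_segment xy (f' x y) (fc x y).
  rewrite normrM ler_wpM2r // fM //.
  move: cxy; rewrite in_itv /= => /andP[xc cy].
  by rewrite !ger0_norm ?subr_ge0 // lerD2r.
have [c cyx fyx] := MVT_segment (ltW yx) (f' y x) (fc y x).
rewrite distrC fyx [`|y - x|]distrC normrM ler_wpM2r // fM //.
move: cyx; rewrite in_itv /= => /andP[yc cx].
by rewrite distrC [`|y - x|]distrC !ger0_norm ?subr_ge0 ?(ltW yx) // lerD2l lerN2.
Qed.

Lemma derivable_near_lipschitz {G : R -> R} {t : R} : derivable G t 1 ->
  exists2 M : R, 0 < M & \forall h \near 0^', `|G (h + t) - G t| <= M * `|h|.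
Proof.
move=> /cvg_ex[l Gl]; exists (`|l| + 1); first by rewrite ltr_wpDl.
have Gl1 := (cvgrPdist_le _ _).1 Gl 1 ltr01.
near=> h.
have hn0 : h != 0 by near: h; exact: nbhs_dnbhs_neq.
have : `|l - h^-1 *: ((G \o shift t) (h *: 1) - G t)| <= 1 by near: h; exact: Gl1.
rewrite /= [_%:A]mulr1.
set q := h^-1 *: _ => lq.
have -> : G (h + t) - G t = h * q by rewrite /q /GRing.scale /= mulVKf.
rewrite normrM mulrC ler_wpM2r // -[q](subrK l) (le_trans (ler_normD _ _)) //.
by rewrite addrC lerD2l distrC.
Unshelve. all: by end_near. Qed.

Lemma is_derive0_small_o (f : R -> R) (t : R) : f t = 0 ->
  (forall e : R, 0 < e -> \forall h \near 0^', `|f (h + t)| <= e * `|h|) ->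
  is_derive t 1 f 0.
Proof.
move=> ft0 f_small.
have f'0 : (fun h => h^-1 *: ((f \o shift t) (h *: 1) - f t)) @ 0^' --> (0 : R).
  apply/cvgrPdist_le => e e0; near=> h.
  have hn0 : h != 0 by near: h; exact: nbhs_dnbhs_neq.
  rewrite /= [_%:A]mulr1 ft0 subr0 sub0r normrN normrZ normfV mulrC.
  rewrite ler_pdivrMr ?normr_gt0 //.
  by near: h; exact: f_small.
by split; [exact: cvgP f'0 | exact: cvg_lim f'0].
Unshelve. all: by end_near. Qed.

Lemma is_derive_expR_scale (alpha t : R) :
  is_derive t 1 (fun s => expR (alpha * s)) (alpha * expR (alpha * t)).
Proof.
change (fun s => expR (alpha * s)) with (expR \o (alpha \*: id)).
by apply: is_derive_eq; rewrite [_%:A]mulr1 mulrC.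
Qed.

Section partial_linearization.
Variables (phi : R -> R -> R) (a b : R).
Hypotheses (dphi : forall s y, s \in `[a, b] -> derivable (phi s) y 1)
  (phi_y_cont : {within `[a, b] `*` setT,
     continuous (fun p : R * R => derive1 (phi p.1) p.2)}).

Lemma partial_linearization_uniform {t : R} (y0 e : R) : t \in `[a, b] -> 0 < e ->
  exists2 d : R, 0 < d & forall s y,
     s \in `[a, b] -> `|s - t| < d -> `|y - y0| < d ->
     `|phi s y - phi s y0 - derive1 (phi t) y0 * (y - y0)| <= e * `|y - y0|.
Proof.
move=> tab e0.
have [d d0 phi_y_near] :=
  within_continuous_prod_eps (p := (t, y0)) phi_y_cont (conj tab I) e0.
exists d => // s y sab st yy0.
set py := derive1 (phi t) y0.
have psi' (z : R) : is_derive z 1 (phi s - py \*: id) (derive1 (phi s) z - py).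
  apply: is_derive_eq; first exact/is_deriveB/derivableP/dphi.
  by rewrite derive1E [_%:A]mulr1.
have -> : phi s y - phi s y0 - py * (y - y0) =
          (phi s y - py * y) - (phi s y0 - py * y0) by ring.
apply: (mean_value_inequality (phi s - py \*: id)) => [z|z zy0].
  by case: (psi' z).
rewrite (is_derive1_val (psi' z)) distrC; apply/ltW/(phi_y_near (s, z)) => //=.
  by rewrite distrC.
by rewrite distrC (le_lt_trans zy0).
Qed.

Lemma is_derive_partial_comp (G : R -> R) (t : R) : t \in `]a, b[ -> derivable G t 1 ->
  derivable (fun s => phi s (G t)) t 1 ->
  is_derive t 1 (fun s => phi s (G s))
    (derive1 (phi t) (G t) * derive1 G t + derive1 (fun s => phi s (G t)) t).
Proof.
move=> tab dG dphit; have tab' : t \in `[a, b] by exact: subset_itv_oo_cc.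
move: tab; rewrite in_itv /= => /andP[ta tb].
set y0 := G t; set py := derive1 (phi t) y0.
pose rem s := phi s (G s) - phi s y0 - py * (G s - y0).
(* [rem] is o(s - t): [G] is Lipschitz at [t] and the linearization is uniform. *)
have rem' : is_derive t 1 rem 0.
  apply: is_derive0_small_o => [|e e0]; first by rewrite /rem !subrr mulr0 subr0.
  have [M M0 GM] := derivable_near_lipschitz dG.
  have [d d0 lin] := partial_linearization_uniform y0 _ tab' (divr_gt0 e0 M0).
  pose r := Num.min (Num.min d (d / M)) (Num.min (t - a) (b - t)).
  have r0 : 0 < r by rewrite !lt_min d0 divr_gt0 // !subr_gt0 ta tb.
  near=> h.
  have : `|h| < r by near: h; exact: dnbhs0_lt.
  rewrite !lt_min => /andP[/andP[hd hdM] /andP[hta hbt]].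
  have hab : h + t \in `[a, b].
    move: hta hbt; rewrite !ltr_norml in_itv /= => /andP[h1 _] /andP[_ h2].
    by apply/andP; split; lra.
  have Gh : `|G (h + t) - y0| <= M * `|h| by near: h; exact: GM.
  have Ghd : `|G (h + t) - y0| < d.
    by rewrite (le_lt_trans Gh) // mulrC -ltr_pdivlMr.
  apply: le_trans (lin (h + t) (G (h + t)) hab _ Ghd) _; first by rewrite addrK.
  by rewrite mulrAC ler_pdivrMr // -mulrA ler_wpM2l ?(ltW e0) // mulrC.
have -> : (fun s => phi s (G s)) = rem + py \*: (G - cst y0) + (fun s => phi s y0).
  apply/funext => s; change (phi s (G s) = rem s + py * (G s - y0) + phi s y0).
  by rewrite /rem; ring.
apply: is_derive_eq.
  apply: is_deriveD; last exact: derivableP dphit.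
  by apply: is_deriveD => //; apply/is_deriveZ/is_deriveB/derivableP.
by rewrite add0r subr0 !derive1E.
Unshelve. all: by end_near. Qed.

Lemma continuous_partial_comp (G : R -> R) (t : R) : t \in `[a, b] ->
  {for t, continuous G} -> {for t, continuous (fun s => phi s (G t))} ->
  (fun s => phi s (G s)) @ within [set` `[a, b]] (nbhs t) --> phi t (G t).
Proof.
move=> tab Gc phic; set y0 := G t; set py := derive1 (phi t) y0.
have [d d0 lin] := partial_linearization_uniform y0 _ tab ltr01.
have phi_lip s : s \in `[a, b] -> `|s - t| < d -> `|G s - y0| < d ->
    `|phi s (G s) - phi s y0| <= (`|py| + 1) * `|G s - y0|.
  move=> sab st Gsd; have := lin s (G s) sab st Gsd; rewrite mul1r => linG.
  rewrite -[phi s (G s) - _](subrK (py * (G s - y0))) (le_trans (ler_normD _ _)) //.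
  by rewrite normrM mulrDl mul1r addrC lerD2l.
have L0 : 0 < `|py| + 1 by rewrite ltr_wpDl.
apply/cvgrPdist_lt => e e0.
have e20 : 0 < e / 2 by rewrite divr_gt0.
have m0 : 0 < Num.min d (e / 2 / (`|py| + 1)) by rewrite lt_min d0 divr_gt0.
rewrite near_withinE; near=> s => sab.
have : `|y0 - G s| < Num.min d (e / 2 / (`|py| + 1)).
  by near: s; exact: (cvgrPdist_lt _ _).1 Gc _ m0.
rewrite lt_min distrC => /andP[Gsd GsL].
have phit : `|phi t y0 - phi s y0| < e / 2.
  by near: s; exact: (cvgrPdist_lt _ _).1 phic _ e20.
have st : `|s - t| < d.
  by rewrite distrC; near: s; exact: (cvgrPdist_lt _ _).1 cvg_id _ d0.
have GsL' : (`|py| + 1) * `|G s - y0| < e / 2 by rewrite -ltr_pdivlMl // mulrC.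
rewrite -(subrKA (phi s y0)) (le_lt_trans (ler_normD _ _)) // (splitr e).
by rewrite ltrD // distrC (le_lt_trans (phi_lip s sab st Gsd)).
Unshelve. all: by end_near. Qed.

End partial_linearization.

Lemma exp_barrier_terminal_le0 {F : R -> R} {alpha T : R} : 0 < T -> 0 < alpha ->
  {within `[0, T], continuous F} -> (forall t, t \in `]0, T[ -> derivable F t 1) ->
  (forall t, t \in `]0, T[ ->
     derive1 F t + alpha * F t + C_alphaT alpha T * F 0 <= 0) ->
  F T <= 0.
Proof.
move=> T0 alpha0 Fc dF Fbarrier.
set E := expR (alpha * T); have E1 : 1 < E by rewrite pexpR_gt1 ?mulr_gt0.
pose c := C_alphaT alpha T * F 0 / alpha.
have cE : c * (E - 1) = F 0.
  by rewrite /c /C_alphaT -/E; field; rewrite gt_eqF // subr_eq0 gt_eqF.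
have Calpha : C_alphaT alpha T * F 0 = alpha * c.
  by rewrite /c; field; rewrite gt_eqF.
pose K := (fun s => expR (alpha * s)) * (F + cst c).
have K' t : t \in `]0, T[ -> is_derive t 1 K
    (expR (alpha * t) * (derive1 F t + alpha * F t + C_alphaT alpha T * F 0)).
  move=> tT; have F' := derivableP (dF t tT); have expR' := is_derive_expR_scale alpha t.
  apply: is_derive_eq; rewrite Calpha derive1E addr0 /GRing.scale /=.
  by change ((F + cst c) t) with (F t + c); ring.
have Kc : {within `[0, T], continuous K}.
  apply/subspace_continuousP => t tT; apply: cvgM.
    have [dE _] := is_derive_expR_scale alpha t.
    apply: cvg_within_filter.
    exact: differentiable_continuous (proj1 (derivable1_diffP _ _) dE).
  by apply: cvgD; [move/subspace_continuousP: Fc; apply | exact: cvg_cst].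
have KT0 : K T <= K 0.
  apply: (ler0_derive1_le_cc (f := K) _ _ Kc); rewrite ?in_itv /= ?lexx ?ltW //.
  - by move=> t /K'[].
  - by move=> t tT; rewrite (is_derive1_val (K' t tT)) pmulr_rle0 ?expR_gt0 ?Fbarrier.
have : E * F T <= 0.
  rewrite -[K T]/(E * (F T + c)) -[K 0]/(expR (alpha * 0) * (F 0 + c)) in KT0.
  by move: KT0; rewrite mulr0 expR0 mul1r -cE; nra.
by rewrite pmulr_rle0 // (lt_trans ltr01 E1).
Qed.

End real_functions.

Theorem theorem2 (R : realType) (T alpha : R) (N : neural_op R)
    (n : nat) (u : 'rV[R]_n -> R -> R) (U Y : R -> R) (phi : R -> R -> R) :
  0 < T -> 0 < alpha ->
  (forall t, t \in `[0, T] -> U t = u (const_mx 1) t) ->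
  (forall t, t \in `[0, T] -> Y t = u 0 t) ->
  (forall x : 'rV[R]_n, (forall i, 0 <= x 0 i <= 1) -> u x 0 = U 0) ->
  (forall t, t \in `[0, T] -> Y t = no_G N T U t) ->
  (forall t, t \in `[0, T] -> derivable U t 1) ->
  (forall y : R, derivable (no_P N) y 1) ->
  (forall x, differentiable (no_Q N) x) ->
  (forall l x, derivable (no_sigma N l) x 1) ->
  (forall l, (l < no_L N)%N ->
     {within `[0, T] `*` `[0, T], continuous (fun p : R * R => no_kappa N l p.1 p.2)}) ->
  (forall l, (l < no_L N)%N -> {within `[0, T], continuous (no_b N l)}) ->
  (forall l t s, (l < no_L N)%N -> t \in `[0, T] -> s \in `[0, T] ->
     derivable (fun t' => no_kappa N l t' s) t 1) ->
  (forall l t, (l < no_L N)%N -> t \in `[0, T] -> derivable (no_b N l) t 1) ->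
  (forall l t, (l < no_L N)%N -> t \in `[0, T] ->
     is_derive t 1 (fun t' => vint T (fun s => no_kappa N l t' s *m no_v N T U l s))
                   (vint T (fun s => no_dkappa N l t s *m no_v N T U l s))) ->
  (forall t y, t \in `[0, T] -> derivable (fun t' => phi t' y) t 1) ->
  (forall t y, t \in `[0, T] -> derivable (phi t) y 1) ->
  {within `[0, T] `*` setT,
     continuous (fun p : R * R => derive1 (fun t' => phi t' p.2) p.1)} ->
  {within `[0, T] `*` setT,
     continuous (fun p : R * R => derive1 (phi p.1) p.2)} ->
  (forall t, t \in `[0, T] ->
     derivable (no_G N T U) t 1 /\
     derive1 (no_G N T U) t = no_Lambda N T U t * derive1 U t + no_mu N T U t)
  /\
  ((forall t, t \in `[0, T] ->
      derive1 (phi t) (no_G N T U t) * derive1 (no_G N T U) t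
      + derive1 (fun t' => phi t' (no_G N T U t)) t
      + alpha * phi t (no_G N T U t) + C_alphaT alpha T * phi 0 (U 0) <= 0) ->
   exists t0, t0 \in `[0, T] /\ forall t, t \in `[t0, T] -> phi t (Y t) <= 0).
Proof.
move=> T0 alpha0 U_in Y_out u_init Y_G dU dP dQ dsigma _ _ _ db dkappa
  dphi_t dphi_y _ phi_y_cont.
set G := no_G N T U.
have G' t : t \in `[0, T] ->
    is_derive t 1 G (no_Lambda N T U t * derive1 U t + no_mu N T U t).
  move=> tT; apply: is_derive_no_G => // [|l lL|l lL];
    [exact: dU | exact: db | exact: dkappa].
split=> [t /G' G'_t|barrier]; first by split; [case: G'_t | exact: is_derive1_val].
have G0 : G 0 = U 0.
  have zero_in : (0 : R) \in `[0, T] by rewrite in_itv /= lexx ltW.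
  by rewrite /G -Y_G // Y_out //; apply: u_init => i; rewrite mxE lexx ler01.
pose F s := phi s (G s).
have F' t : t \in `]0, T[ -> is_derive t 1 F
    (derive1 (phi t) (G t) * derive1 G t + derive1 (fun s => phi s (G t)) t).
  move=> tT; have tT' := subset_itv_oo_cc tT.
  apply: (@is_derive_partial_comp R phi 0 T) => //; first by case: (G' t tT').
  exact: dphi_t.
have FT : F T <= 0.
  apply: (exp_barrier_terminal_le0 T0 alpha0) => [|t /F'[]//|t tT].
    apply/subspace_continuousP => t tT.
    apply: (@continuous_partial_comp R phi 0 T) => //.
      by case: (G' t tT) => /derivable1_diffP/differentiable_continuous.
    by have /derivable1_diffP/differentiable_continuous := dphi_t t (G t) tT.
  rewrite (is_derive1_val (F' t tT)) /F G0; exact/barrier/subset_itv_oo_cc.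
exists T; split=> [|t]; first by rewrite in_itv /= lexx ltW.
rewrite in_itv /= => /andP[Tt tT]; have -> : t = T by apply/le_anti/andP.
by rewrite Y_G // in_itv /= lexx ltW.
Qed.
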